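(* Let $G$ be a group and $L,R$ nonempty subsets of $G$ such that $\mathcal{W}(L)$ and $\mathcal{W}(R)$ are subgroups of $G$. In $2\mathrm{S}(G;L,R)$, if $g=w_{L^{-1},a}\,w_{R,n}$ for integers $a,n\ge 0$, then for every $l\in L$ and every $r\in R$, $g$ is strongly connected to $l^d$ and to $r^d$, where $d=n-a$.
   Context: For nonempty subsets $L,R$ of a group $G$, the two-sided group digraph $2\mathrm{S}(G;L,R)$ has vertex set $G$ and a directed arc $(g,h)$ if and only if $h=l^{-1}gr$ for some $l\in L$, $r\in R$. For a nonempty subset $S$, $w_{S,n}$ denotes the element given by some word $s_1\cdots s_n$ with $s_i\in S$ (length $0$ giving $e$), and $\mathcal{W}(S)$ is the set of elements given by words in $S$ of positive length. Vertex $g$ is strongly connected to $h$ if there are directed paths from $g$ to $h$ and from $h$ to $g$. *)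

From Stdlib Require Import ZArith Relations.

Record Group := {
  carrier :> Type;
  gmul : carrier -> carrier -> carrier;
  gone : carrier;
  ginv : carrier -> carrier;
  gmul_assoc : forall x y z, gmul x (gmul y z) = gmul (gmul x y) z;
  gmul_1l : forall x, gmul gone x = x;
  gmul_1r : forall x, gmul x gone = x;
  gmul_Vl : forall x, gmul (ginv x) x = gone;
  gmul_Vr : forall x, gmul x (ginv x) = gone
}.

Arguments gmul {g} _ _.
Arguments gone {g}.
Arguments ginv {g} _.

Definition subset (G : Group) := G -> Prop.

Definition nonempty {G : Group} (S : subset G) : Prop := exists x, S x.

Definition inv_set {G : Group} (S : subset G) : subset G :=
  fun x => exists s, S s /\ x = ginv s.

(* word_of S n g : g is the element given by some word s_1 ... s_n with
   s_i in S (length 0 gives the identity) -- i.e. g = w_{S,n}. *)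
Inductive word_of {G : Group} (X : subset G) : nat -> G -> Prop :=
| word_nil : word_of X 0 gone
| word_snoc : forall n g s, word_of X n g -> X s -> word_of X (Datatypes.S n) (gmul g s).

Definition Wset {G : Group} (S : subset G) : subset G :=
  fun g => exists n, (0 < n)%nat /\ word_of S n g.

Definition is_subgroup {G : Group} (H : subset G) : Prop :=
  H gone /\ (forall x y, H x -> H y -> H (gmul x y)) /\ (forall x, H x -> H (ginv x)).

Fixpoint gpow {G : Group} (x : G) (k : nat) : G :=
  match k with O => gone | S k' => gmul (gpow x k') x end.

Definition gzpow {G : Group} (x : G) (d : Z) : G :=
  if (0 <=? d)%Z then gpow x (Z.to_nat d) else ginv (gpow x (Z.to_nat (- d))).

Definition arc2S {G : Group} (L R : subset G) (g h : G) : Prop :=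
  exists l r, L l /\ R r /\ h = gmul (gmul (ginv l) g) r.

Definition dpath {G : Group} (L R : subset G) : G -> G -> Prop :=
  clos_refl_trans G (arc2S L R).

Definition strongly_connected {G : Group} (L R : subset G) (g h : G) : Prop :=
  dpath L R g h /\ dpath L R h g.

(* The arc [x -> l^-1 x r] says that [l y] and [y r] are adjacent for every [y],
   [l in L], [r in R]; likewise [l^-1 y] and [y r^-1].  Walking the letters of a
   word across [y] one at a time therefore trades an [R]-word of length [k] for
   [l^k], an [L]-word for [r^k], and similarly for inverse words, all inside one
   weak component.  This moves [g = w_{L^-1,a} w_{R,n}] to [r0^n r0^-a = r0^d]
   for a fixed [r0 in R], and also [l^d] and [r^d] to [r0^d].  Finally, when
   [W(L)] and [W(R)] are groups every arc can be reversed by a path, since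
   [l^-1] and [r^-1] are words, padded with words for the identity to a common
   length; so weak components are strong components. *)
From Stdlib Require Import ZArith Relations Lia.

Local Infix "**" := gmul (at level 40, left associativity).

Section GroupFacts.

Context {G : Group}.
Implicit Types x y : G.

Lemma mulKg x y : ginv x ** (x ** y) = y.
Proof. now rewrite gmul_assoc, gmul_Vl, gmul_1l. Qed.

Lemma mulKVg x y : x ** (ginv x ** y) = y.
Proof. now rewrite gmul_assoc, gmul_Vr, gmul_1l. Qed.

Lemma mulgK x y : y ** x ** ginv x = y.
Proof. now rewrite <- gmul_assoc, gmul_Vr, gmul_1r. Qed.

Lemma mulgKV x y : y ** ginv x ** x = y.
Proof. now rewrite <- gmul_assoc, gmul_Vl, gmul_1r. Qed.

Lemma invg_uniq x y : x ** y = gone -> y = ginv x.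
Proof. intro Hxy. now rewrite <- (mulKg x y), Hxy, gmul_1r. Qed.

Lemma invgK x : ginv (ginv x) = x.
Proof. symmetry. apply invg_uniq, gmul_Vl. Qed.

Lemma invMg x y : ginv (x ** y) = ginv y ** ginv x.
Proof. symmetry. apply invg_uniq. now rewrite gmul_assoc, mulgK, gmul_Vr. Qed.

Lemma gpowSl x k : gpow x (S k) = x ** gpow x k.
Proof.
  induction k as [|k IH]; simpl in *.
  - now rewrite gmul_1l, gmul_1r.
  - now rewrite IH, <- gmul_assoc, IH.
Qed.

Lemma gpowD x m k : gpow x (m + k) = gpow x m ** gpow x k.
Proof.
  induction k as [|k IH]; simpl.
  - now rewrite Nat.add_0_r, gmul_1r.
  - now rewrite Nat.add_succ_r; simpl; rewrite IH, gmul_assoc.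
Qed.

Lemma gpowV x k : ginv (gpow x k) = gpow (ginv x) k.
Proof.
  induction k as [|k IH].
  - symmetry. apply invg_uniq, gmul_1l.
  - now rewrite gpowSl at 1; rewrite invMg, IH.
Qed.

Lemma gzpow_sub x n a :
  gpow x n ** gpow (ginv x) a = gzpow x (Z.of_nat n - Z.of_nat a).
Proof.
  unfold gzpow. destruct (Nat.le_gt_cases a n) as [Han | Han].
  - replace n with (n - a + a) at 1 by lia.
    replace (Z.of_nat n - Z.of_nat a)%Z with (Z.of_nat (n - a)) by lia.
    rewrite (proj2 (Z.leb_le _ _)) by lia.
    now rewrite Nat2Z.id, gpowD, <- gpowV, mulgK.
  - replace a with (n + (a - n)) at 1 by lia.
    replace (- (Z.of_nat n - Z.of_nat a))%Z with (Z.of_nat (a - n)) by lia.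
    rewrite (proj2 (Z.leb_gt _ _)) by lia.
    now rewrite Nat2Z.id, gpowD, <- !gpowV, gmul_assoc, gmul_Vr, gmul_1l.
Qed.

Lemma word_gpow (X : subset G) s k : X s -> word_of X k (gpow s k).
Proof. intro Hs. induction k; constructor; auto. Qed.

Lemma word_cat (X : subset G) p q x y :
  word_of X p x -> word_of X q y -> word_of X (p + q) (x ** y).
Proof.
  intros Hx Hy. induction Hy as [|q y s Hy IH Hs].
  - now rewrite Nat.add_0_r, gmul_1r.
  - rewrite Nat.add_succ_r, gmul_assoc. now constructor.
Qed.

Lemma word1 (X : subset G) s : X s -> word_of X 1 s.
Proof. intro Hs. rewrite <- (gmul_1l _ s). constructor; [constructor | exact Hs]. Qed.

Lemma word_one_rep (X : subset G) p j :
  word_of X p gone -> word_of X (j * p) gone.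
Proof.
  intro H1. induction j as [|j IH]; [constructor |].
  pose proof (word_cat _ _ _ _ _ H1 IH) as Hw. now rewrite gmul_1l in Hw.
Qed.

Lemma inv_set_ginv (X : subset G) s : X s -> inv_set X (ginv s).
Proof. now exists s. Qed.

Lemma inverse_word (X : subset G) s :
  is_subgroup (Wset X) -> X s ->
  exists m, word_of X m (ginv s) /\ word_of X (S m) gone.
Proof.
  intros [_ [_ HV]] Hs.
  destruct (HV s) as [m [_ Hm]]; [exists 1; split; auto; now apply word1 |].
  exists m. split; [exact Hm |].
  rewrite <- (gmul_Vr _ s). exact (word_cat _ 1 m _ _ (word1 _ _ Hs) Hm).
Qed.

End GroupFacts.

Definition weakly_connected {G : Group} (L R : subset G) : relation G :=
  clos_refl_sym_trans G (arc2S L R).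

Section TwoSidedDigraph.

Context {G : Group} (L R : subset G).
Implicit Types x y : G.

Lemma dpath_words k A B x :
  word_of L k A -> word_of R k B -> dpath L R x (ginv A ** x ** B).
Proof.
  intro HA. revert B. induction HA as [|k A l HA IH Hl]; intros B HB.
  - inversion HB; subst.
    rewrite <- (invg_uniq gone gone (gmul_1l _ _)), gmul_1l, gmul_1r.
    apply rt_refl.
  - inversion HB as [|k' B' r HB' Hr]; subst.
    eapply rt_trans; [exact (IH _ HB') |].
    apply rt_step. exists l, r. repeat split; auto.
    now rewrite invMg, !gmul_assoc.
Qed.

Hypotheses (HL : is_subgroup (Wset L)) (HR : is_subgroup (Wset R)).

(* [l^-1] and [r^-1] are words of lengths [m] and [m']; padding them with
   [m'] resp. [m] copies of identity words of lengths [m+1] resp. [m'+1] gives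
   both the length [m + m' + m m']. *)
Lemma arc2S_reverse x y : arc2S L R x y -> dpath L R y x.
Proof.
  intros (l & r & Hl & Hr & ->).
  destruct (inverse_word L l HL Hl) as (m & Hlinv & Hl1).
  destruct (inverse_word R r HR Hr) as (m' & Hrinv & Hr1).
  pose proof (word_cat _ _ _ _ _ Hlinv (word_one_rep _ _ m' Hl1)) as HA.
  pose proof (word_cat _ _ _ _ _ Hrinv (word_one_rep _ _ m Hr1)) as HB.
  rewrite gmul_1r in HA, HB.
  replace (m + m' * S m) with (m' + m * S m') in HA by lia.
  pose proof (dpath_words _ _ _ (ginv l ** x ** r) HA HB) as Hpath.
  now rewrite invgK, <- !gmul_assoc, mulKVg, gmul_Vr, gmul_1r, gmul_assoc in Hpath.
Qed.

Lemma dpath_sym x y : dpath L R x y -> dpath L R y x.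
Proof.
  induction 1.
  - now apply arc2S_reverse.
  - apply rt_refl.
  - eapply rt_trans; eauto.
Qed.

Lemma weakly_connected_strongly x y :
  weakly_connected L R x y -> strongly_connected L R x y.
Proof.
  intro Hxy. enough (Hpath : forall x y, weakly_connected L R x y -> dpath L R x y).
  { split; apply Hpath; [| apply rst_sym]; exact Hxy. }
  clear x y Hxy. induction 1.
  - now apply rt_step.
  - apply rt_refl.
  - now apply dpath_sym.
  - eapply rt_trans; eauto.
Qed.

End TwoSidedDigraph.

Section LetterExchange.

Context {G : Group} (L R : subset G).
Implicit Types x y : G.

Let wc := weakly_connected L R.

Lemma wc_swap_l l r y : L l -> R r -> wc (l ** y) (y ** r).
Proof.
  intros Hl Hr. apply rst_step. exists l, r. repeat split; auto.
  now rewrite mulKg.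
Qed.

Lemma wc_swap_linv l r y : L l -> R r -> wc (ginv l ** y) (y ** ginv r).
Proof.
  intros Hl Hr. apply rst_sym, rst_step. exists l, r. repeat split; auto.
  now rewrite <- gmul_assoc, mulgKV.
Qed.

Lemma wc_word_l (X : subset G) t :
  (forall s y, X s -> wc (s ** y) (y ** t)) ->
  forall k A y, word_of X k A -> wc (A ** y) (y ** gpow t k).
Proof.
  intros Hswap k A y HA. revert y.
  induction HA as [|k A s HA IH Hs]; intro y; simpl.
  - rewrite gmul_1l, gmul_1r. apply rst_refl.
  - rewrite <- gmul_assoc. eapply rst_trans; [apply IH |].
    rewrite <- gmul_assoc, (gmul_assoc _ y). now apply Hswap.
Qed.

Lemma wc_word_r (X : subset G) t :
  (forall s y, X s -> wc (y ** s) (t ** y)) ->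
  forall k B y, word_of X k B -> wc (y ** B) (gpow t k ** y).
Proof.
  intros Hswap k B y HB. revert y.
  induction HB as [|k B s HB IH Hs]; intro y; simpl.
  - rewrite gmul_1l, gmul_1r. apply rst_refl.
  - rewrite gmul_assoc. eapply rst_trans; [now apply Hswap |].
    rewrite gmul_assoc, <- (gmul_assoc _ _ t). apply IH.
Qed.

Lemma wc_word_L r k A y : R r -> word_of L k A -> wc (A ** y) (y ** gpow r k).
Proof. intro Hr. apply wc_word_l. intros; now apply wc_swap_l. Qed.

Lemma wc_word_Linv r k U y :
  R r -> word_of (inv_set L) k U -> wc (U ** y) (y ** gpow (ginv r) k).
Proof.
  intro Hr. apply wc_word_l. intros s y' (l & Hl & ->). now apply wc_swap_linv.
Qed.

Lemma wc_word_R l k B y : L l -> word_of R k B -> wc (y ** B) (gpow l k ** y).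
Proof. intro Hl. apply wc_word_r. intros; apply rst_sym; now apply wc_swap_l. Qed.

Lemma wc_word_Rinv l k W y :
  L l -> word_of (inv_set R) k W -> wc (y ** W) (gpow (ginv l) k ** y).
Proof.
  intro Hl. apply wc_word_r. intros s y' (r & Hr & ->).
  apply rst_sym. now apply wc_swap_linv.
Qed.

Lemma wc_gzpow_L l r d : L l -> R r -> wc (gzpow l d) (gzpow r d).
Proof.
  intros Hl Hr. unfold gzpow. destruct (0 <=? d)%Z.
  - pose proof (wc_word_L r _ _ gone Hr (word_gpow _ _ (Z.to_nat d) Hl)) as Hwc.
    now rewrite gmul_1l, gmul_1r in Hwc.
  - pose proof (wc_word_Linv r _ _ gone Hr
      (word_gpow _ _ (Z.to_nat (- d)) (inv_set_ginv _ _ Hl))) as Hwc.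
    now rewrite gmul_1l, gmul_1r, <- !gpowV in Hwc.
Qed.

Lemma wc_gzpow_R l r r' d : L l -> R r -> R r' -> wc (gzpow r d) (gzpow r' d).
Proof.
  intros Hl Hr Hr'. unfold gzpow. destruct (0 <=? d)%Z.
  - pose proof (wc_word_R l _ _ gone Hl (word_gpow _ _ (Z.to_nat d) Hr)) as Hwc.
    pose proof (wc_word_R l _ _ gone Hl (word_gpow _ _ (Z.to_nat d) Hr')) as Hwc'.
    rewrite gmul_1l, gmul_1r in Hwc, Hwc'.
    eapply rst_trans; [exact Hwc | now apply rst_sym].
  - pose proof (wc_word_Rinv l _ _ gone Hl
      (word_gpow _ _ (Z.to_nat (- d)) (inv_set_ginv _ _ Hr))) as Hwc.
    pose proof (wc_word_Rinv l _ _ gone Hl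
      (word_gpow _ _ (Z.to_nat (- d)) (inv_set_ginv _ _ Hr'))) as Hwc'.
    rewrite gmul_1l, gmul_1r, <- !gpowV in Hwc, Hwc'.
    eapply rst_trans; [exact Hwc | now apply rst_sym].
Qed.

Lemma wc_words_gzpow l r a n u v :
  L l -> R r -> word_of (inv_set L) a u -> word_of R n v ->
  wc (u ** v) (gzpow r (Z.of_nat n - Z.of_nat a)).
Proof.
  intros Hl Hr Hu Hv. rewrite <- gzpow_sub.
  eapply rst_trans; [exact (wc_word_R l _ _ u Hl Hv) |].
  eapply rst_trans; [exact (wc_word_L r _ _ u Hr (word_gpow _ _ n Hl)) |].
  exact (wc_word_Linv r _ _ _ Hr Hu).
Qed.

End LetterExchange.

Theorem mainTheorem7 (G : Group) (L R : subset G) :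
  nonempty L -> nonempty R ->
  is_subgroup (Wset L) -> is_subgroup (Wset R) ->
  forall (g u v : G) (a n : nat),
    word_of (inv_set L) a u -> word_of R n v -> g = gmul u v ->
    let d := (Z.of_nat n - Z.of_nat a)%Z in
    (forall l, L l -> strongly_connected L R g (gzpow l d)) /\
    (forall r, R r -> strongly_connected L R g (gzpow r d)).
Proof.
  intros [l0 Hl0] [r0 Hr0] HL HR g u v a n Hu Hv -> d.
  pose proof (wc_words_gzpow L R l0 r0 a n u v Hl0 Hr0 Hu Hv) as Hg.
  split; intros x Hx; apply weakly_connected_strongly; auto;
    eapply rst_trans; try exact Hg; apply rst_sym.
  - now apply wc_gzpow_L.
  - now apply (wc_gzpow_R L R l0).
Qed.
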